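(* Let $n$ be a positive integer and let $\mathcal F$ be an $\mathcal N$-saturated family of subsets of $[n]$. Let $\mathcal G$ be a component of $\mathcal F$. If $T$ is a maximal element of $\mathcal G$ and $S$ is a minimal element of $\mathcal G$ (with respect to inclusion), then $S\subseteq T$.
   Context: The poset $\mathcal N$ has four elements $a,b,c,d$ with $a<c$, $b<c$, $b<d$ and no other comparabilities (so $a,b$ are its minimal elements, $c,d$ its maximal elements; $c$ is the unique maximal element comparable to both minimal elements and $b$ the unique minimal element comparable to both maximal elements). A family $\mathcal Q$ of sets (ordered by inclusion) contains an induced copy of $\mathcal N$ if there are distinct sets in $\mathcal Q$ whose inclusion relations are exactly those of $a,b,c,d$ above. A family $\mathcal F$ of subsets of $[n]=\{1,\dots,n\}$ is $\mathcal N$-saturated if $\mathcal F$ contains no induced copy of $\mathcal N$, but for every $S\subseteq[n]$ with $S\notin\mathcal F$, the family $\mathcal F\cup\{S\}$ contains an induced copy of $\mathcal N$. A component of $\mathcal F$ is the vertex set of a connected component of the Hasse diagram (as a graph) of the poset $(\mathcal F\setminus\{\emptyset,[n]\},\subseteq)$. *)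

From mathcomp Require Import all_boot.
Set Implicit Arguments. Unset Strict Implicit. Unset Printing Implicit Defensive.

Section Defs.
Variable n : nat.
Notation sT := {set 'I_n}.

Definition comparable (X Y : sT) : bool := (X \subset Y) || (Y \subset X).

(* Q contains an induced copy of the poset N:
   a < c, b < c, b < d, and no other comparabilities. *)
Definition has_induced_N (Q : {set sT}) : Prop :=
  exists a b c d : sT,
    [/\ [/\ a \in Q, b \in Q, c \in Q & d \in Q],
        uniq [:: a; b; c; d],
        [/\ a \subset c, b \subset c & b \subset d] &
        [/\ ~~ comparable a b, ~~ comparable a d & ~~ comparable c d]].

Definition N_saturated (F : {set sT}) : Prop :=
  ~ has_induced_N F /\ forall S : sT, S \notin F -> has_induced_N (S |: F).

Definition covers_in (P : {set sT}) (X Y : sT) : bool :=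
  [&& X \in P, Y \in P, X \proper Y &
      [forall Z in P, ~~ ((X \proper Z) && (Z \proper Y))]].

Definition hasse_adj (P : {set sT}) : rel sT :=
  fun X Y => covers_in P X Y || covers_in P Y X.

Definition inner (F : {set sT}) : {set sT} := F :\: [set set0; setT].

(* G is (the vertex set of) a connected component of the Hasse diagram
   of (F \ {emptyset, [n]}, \subset). *)
Definition is_component (F G : {set sT}) : Prop :=
  exists2 X, X \in inner F & G = [set Y | connect (hasse_adj (inner F)) X Y].

Definition maximal_in (G : {set sT}) (T : sT) : Prop :=
  T \in G /\ forall U, U \in G -> T \subset U -> U = T.

Definition minimal_in (G : {set sT}) (S : sT) : Prop :=
  S \in G /\ forall U, U \in G -> U \subset S -> U = S.

End Defs.

(* Fix a minimal element S of the
   component G and call Y in G good if some member of G contains both S and Y.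
   Goodness passes from Y to any Z in G comparable with Y: if Y is below Z and
   neither Z nor S lies below a common member u of G above S and Y, then S, Y,
   u, Z form an induced copy of N (with S and Y minimal, u and Z maximal).
   Hasse edges join comparable sets and G is connected, so the maximal element
   T is good, and maximality forces the common upper bound to be T itself. *)

From Pilot Require Import Defs.
From mathcomp Require Import all_boot.
Set Implicit Arguments. Unset Strict Implicit. Unset Printing Implicit Defensive.

Lemma connect_invariant (T : finType) (e : rel T) (a : pred T) x y :
  (forall u v, a u -> e u v -> a v) -> a x -> connect e x y -> a y.
Proof.
move=> stable_a ax /connectP [p + ->]; elim: p x ax => [|z p IHp] x ax //=.
by case/andP=> exz; apply: IHp; apply: stable_a exz.
Qed.

Section NFreeComponents.

Variable n : nat.
Implicit Types (F G Q : {set {set 'I_n}}) (S Y Z a b c d : {set 'I_n}).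

Lemma has_induced_N_intro Q a b c d :
  [/\ a \in Q, b \in Q, c \in Q & d \in Q] ->
  [/\ a \subset c, b \subset c & b \subset d] ->
  [/\ ~~ Defs.comparable a b, ~~ Defs.comparable a d
    & ~~ Defs.comparable c d] ->
  has_induced_N Q.
Proof.
move=> inQ [ac bc bd] [ab ad cd]; exists a, b, c, d; split=> //.
have neq_of_incomp X Y : ~~ Defs.comparable X Y -> X != Y.
  by apply: contraNneq => ->; rewrite /Defs.comparable subxx.
have neq_ac : a != c.
  by apply: contraNneq ab => ->; rewrite /Defs.comparable bc orbT.
have neq_bc : b != c by apply: contraNneq ab => ->; rewrite /Defs.comparable ac.
have neq_bd : b != d.
  by apply: contraNneq cd => <-; rewrite /Defs.comparable bc orbT.
by rewrite /= !inE !negb_or neq_ac neq_bc neq_bd !neq_of_incomp.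
Qed.

Definition joint_upper_bound G S Y : bool :=
  [exists u in G, (S \subset u) && (Y \subset u)].

Lemma joint_upper_bound_comparable Q G S Y Z :
  ~ has_induced_N Q -> G \subset Q -> minimal_in G S ->
  Y \in G -> Z \in G -> Defs.comparable Y Z ->
  joint_upper_bound G S Y -> joint_upper_bound G S Z.
Proof.
move=> freeQ /subsetP GQ [SG minS] YG ZG /orP [YZ|ZY]
  /exists_inP [u uG /andP [Su Yu]]; last first.
  by apply/exists_inP; exists u; rewrite ?Su ?(subset_trans ZY Yu).
have [SZ|nSZ] := boolP (S \subset Z).
  by apply/exists_inP; exists Z; rewrite ?SZ ?subxx.
have [Zu|nZu] := boolP (Z \subset u).
  by apply/exists_inP; exists u; rewrite ?Su ?Zu.
case: freeQ; apply: (@has_induced_N_intro _ S Y u Z).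
- by split; apply: GQ.
- by split.
rewrite /Defs.comparable !negb_or nSZ nZu andbT; split.
- apply/andP; split; first by apply: contra nSZ => SY; apply: subset_trans SY YZ.
  by apply/negP => /(minS Y YG) eqYS; move: nSZ; rewrite -eqYS YZ.
- by apply: contra nZu => ZS; apply: subset_trans ZS Su.
- by apply: contra nSZ; apply: subset_trans Su.
Qed.

Lemma hasse_adj_sym Q : symmetric (hasse_adj Q).
Proof. by move=> Y Z; rewrite /hasse_adj orbC. Qed.

Lemma hasse_adj_comparable Q Y Z :
  hasse_adj Q Y Z -> [/\ Y \in Q, Z \in Q & Defs.comparable Y Z].
Proof.
rewrite /hasse_adj /covers_in /Defs.comparable.
by case/orP=> /and4P [-> -> /proper_sub -> _]; rewrite ?orbT.
Qed.

Section Component.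

Variables F G : {set {set 'I_n}}.
Hypothesis compG : is_component F G.

Local Notation adj := (hasse_adj (inner F)).

Lemma component_sub : G \subset F.
Proof.
have inner_closed Y Z : Y \in inner F -> adj Y Z -> Z \in inner F.
  by move=> _ /hasse_adj_comparable [].
case: compG => X XF ->; apply/subsetP => Y; rewrite inE => XY.
by have := connect_invariant inner_closed XF XY; rewrite inE => /andP [].
Qed.

Lemma component_adj_closed Y Z : Y \in G -> adj Y Z -> Z \in G.
Proof.
case: compG => X _ ->; rewrite !inE => XY YZ.
exact: connect_trans XY (connect1 YZ).
Qed.

Lemma component_connect Y Z : Y \in G -> Z \in G -> connect adj Y Z.
Proof.
have sym_adj : connect_sym adj by apply: sym_connect_sym; apply: hasse_adj_sym.
case: compG => X _ ->; rewrite !inE sym_adj => XY; exact: connect_trans.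
Qed.

End Component.

End NFreeComponents.

Theorem lemma2p1 (n : nat) (F G : {set {set 'I_n}}) (S T : {set 'I_n}) :
  0 < n -> N_saturated F -> is_component F G ->
  maximal_in G T -> minimal_in G S -> S \subset T.
Proof.
move=> _ [freeF _] compG [TG maxT] [SG minS].
pose good := [pred Y | (Y \in G) && joint_upper_bound G S Y].
have good_adj Y Z : good Y -> hasse_adj (inner F) Y Z -> good Z.
  case/andP=> YG ubY adjYZ; have ZG := component_adj_closed compG YG adjYZ.
  rewrite /= ZG; case/hasse_adj_comparable: adjYZ => _ _ YZ.
  exact: joint_upper_bound_comparable freeF (component_sub compG) _ YG ZG YZ ubY.
have goodS : good S by rewrite /= SG; apply/exists_inP; exists S; rewrite ?subxx.
have /andP [_ /exists_inP [u uG /andP [Su Tu]]] :=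
  connect_invariant good_adj goodS (component_connect compG SG TG).
by rewrite -(maxT u uG Tu).
Qed.
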